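(* Let $\{\gamma_k\}$ be strictly positive numbers with $\gamma_k\to\infty$, $\{g_k\}$ probability generating functions, $G_k(z)=k\gamma_k[g_k(e^{-z/k})-e^{-z/k}]$ for $z\ge0$, and $$v_k(t,\lambda)=-k\log g_k^{[\gamma_kt]}(e^{-\lambda/k}),\qquad t,\lambda\ge0,$$ where $g_k^n$ is the $n$-fold iterate of $g_k$ ($g_k^0(z)=z$) and $[\cdot]$ is the integer part. If $\{G_k\}$ is uniformly Lipschitz on $[0,1]$, then there are constants $B,N\ge0$ such that $v_k(t,\lambda)\le\lambda e^{Bt}$ for all $t,\lambda\ge0$ and all $k\ge N$. *)

From mathcomp Require Import all_boot all_order all_algebra.
From mathcomp Require Import all_classical all_reals all_analysis.
Set Implicit Arguments. Unset Strict Implicit. Unset Printing Implicit Defensive.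
Import Order.TTheory GRing.Theory Num.Theory numFieldNormedType.Exports.
Local Open Scope ring_scope.
Local Open Scope classical_set_scope.

Definition is_pgf {R : realType} (g : R -> R) : Prop :=
  exists p : nat -> R,
    (forall n, 0 <= p n) /\
    ((fun N => \sum_(n < N) p n) @ \oo --> (1 : R)) /\
    (forall s : R, 0 <= s <= 1 ->
       (fun N => \sum_(n < N) p n * s ^+ n) @ \oo --> g s).

Definition Gk {R : realType} (gamma : nat -> R) (g : nat -> R -> R)
  (k : nat) (z : R) : R :=
  k%:R * gamma k * (g k (expR (- (z / k%:R))) - expR (- (z / k%:R))).

Definition vk {R : realType} (gamma : nat -> R) (g : nat -> R -> R)
  (k : nat) (t lambda : R) : R :=
  - (k%:R * ln (iter (Num.truncn (gamma k * t)) (g k) (expR (- (lambda / k%:R))))).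

Definition unif_lipschitz01 {R : realType} (F : nat -> R -> R) : Prop :=
  exists L : R, forall k (x y : R), 0 <= x <= 1 -> 0 <= y <= 1 ->
    `|F k x - F k y| <= L * `|x - y|.

(* Since g_k(1) = 1, the Lipschitz bound |G_k(z) - G_k(0)| <= L z forces
   1 - g_k(e^{-y}) <= (1 - e^{-y}) + (L / gamma_k) y for small y > 0; comparing
   the terms of order y as y -> 0 shows that the offspring mean m_k = g_k'(1)
   is at most mu_k = 1 + L / gamma_k.  By Jensen's inequality for the convex
   map n |-> s^n, g_k(s) >= s^{m_k} >= s^{mu_k} on (0, 1], so iterating gives
   -log g_k^n(s) <= mu_k^n (-log s), and with n = [gamma_k t] we get
   v_k(t, lambda) <= lambda mu_k^n <= lambda e^{L t}. *)

From mathcomp Require Import all_boot all_order all_algebra.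
From mathcomp Require Import all_classical all_reals all_analysis.
From mathcomp Require Import ring lra.
Import Order.TTheory GRing.Theory Num.Theory numFieldNormedType.Exports.
Local Open Scope ring_scope.
Local Open Scope classical_set_scope.

Lemma natrM_subr_exprn_le {R : realFieldType} {s : R} (n : nat) :
  0 <= s <= 1 -> n%:R * (1 - s) * s ^+ n <= 1 - s ^+ n.
Proof.
move=> /andP[s0 s1].
rewrite -[X in _ <= X - _](expr1n R n) subrXX.
under [X in _ <= _ * X]eq_bigr do rewrite expr1n mul1r.
have -> : n%:R * (1 - s) * s ^+ n = (1 - s) * \sum_(i < n) s ^+ n.
  by rewrite sumr_const card_ord -mulr_natl; ring.
rewrite ler_wpM2l ?subr_ge0 //; apply: ler_sum => i _.
by apply: ler_wiXn2l => //; exact: ltnW.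
Qed.

Lemma partial_sum_le_lim {R : realFieldType} {f : nat -> R} {l : R} (N : nat) :
  (forall n, 0 <= f n) -> (fun M => \sum_(n < M) f n) @ \oo --> l ->
  \sum_(n < N) f n <= l.
Proof.
move=> f_ge0 f_cvg; apply: (cvgr_to_ge f_cvg); near=> M.
have NM : (N <= M)%N by near: M; exact: nbhs_infty_ge.
rewrite -!(big_mkord xpredT) (big_cat_nat (leq0n N) NM) /=.
by rewrite lerDl sumr_ge0.
Unshelve. all: by end_near.
Qed.

Lemma cvg_mulr_expRN_exprn_at_right0 {R : realType} (M : R) (n : nat) :
  (fun y : R => M * expR (- y) ^+ n) @ 0^'+ --> M.
Proof.
have cont : continuous (fun y : R => M * expR (- y) ^+ n).
  move=> y; apply: cvgMl_tmp.
  have expRN_cont := continuous_comp (@oppr_continuous R R^o y) (@continuous_expR R (- y)).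
  exact: continuous_comp expRN_cont (@exprn_continuous R n (expR (- y))).
by have := cvg_at_right_filter (cont 0); rewrite /= oppr0 expR0 expr1n mulr1.
Qed.

Section ProbabilityGeneratingFunction.
Context {R : realType} {p : nat -> R} {h : R -> R}.
Hypothesis p_ge0 : forall n, 0 <= p n.
Hypothesis p_sum1 : (fun N => \sum_(n < N) p n) @ \oo --> (1 : R).
Hypothesis h_series : forall s, 0 <= s <= 1 ->
  (fun N => \sum_(n < N) p n * s ^+ n) @ \oo --> h s.

Local Notation mean N := (\sum_(n < N) p n * n%:R).

Lemma pgf1 : h 1 = 1.
Proof.
have sum_p_1 : (fun N => \sum_(n < N) p n * 1 ^+ n) = (fun N => \sum_(n < N) p n).
  by apply/funext => N; apply: eq_bigr => n _; rewrite expr1n mulr1.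
have := h_series 1; rewrite ler01 lexx sum_p_1 => /(_ isT) h1_cvg.
exact: cvg_unique h1_cvg p_sum1.
Qed.

Lemma pgf_le1 s : 0 <= s <= 1 -> h s <= 1.
Proof.
move=> /[dup] s01 /andP[s0 s1]; apply: (cvgr_to_le (h_series _ s01)).
apply: nearW => N; apply: le_trans (partial_sum_le_lim N p_ge0 p_sum1).
by apply: ler_sum => n _; rewrite ler_piMr // exprn_ile1.
Qed.

Lemma pgf_mean_defect_le s N : 0 <= s <= 1 ->
  (1 - s) * s ^+ N * mean N <= 1 - h s.
Proof.
move=> /[dup] s01 /andP[s0 s1].
have defect_cvg : (fun M => \sum_(n < M) p n * (1 - s ^+ n)) @ \oo --> 1 - h s.
  rewrite (_ : (fun M => _) = fun M => \sum_(n < M) p n - \sum_(n < M) p n * s ^+ n).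
    exact: cvgB p_sum1 (h_series _ s01).
  by apply/funext => M; rewrite -sumrB; apply: eq_bigr => n _; rewrite mulrBr mulr1.
have defect_ge0 n : 0 <= p n * (1 - s ^+ n) by rewrite mulr_ge0 ?subr_ge0 ?exprn_ile1.
apply: le_trans (partial_sum_le_lim N defect_ge0 defect_cvg).
rewrite mulr_sumr; apply: ler_sum => n _.
rewrite mulrCA ler_wpM2l //; apply: le_trans (natrM_subr_exprn_le n s01).
rewrite mulrC mulrA ler_wpM2l ?mulr_ge0 ?subr_ge0 //.
by apply: ler_wiXn2l => //; exact: ltnW.
Qed.

Lemma pgf_mean_le (c delta : R) : 0 <= c -> 0 < delta ->
  (forall y, 0 < y <= delta -> expR (- y) - c * y <= h (expR (- y))) ->
  forall N, mean N <= 1 + c.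
Proof.
move=> c0 delta0 h_lower N.
have damped_mean_le y : 0 < y <= delta -> mean N * expR (- y) ^+ N.+1 <= 1 + c.
  move=> /[dup] y_delta /andP[y0 _]; set s := expR (- y).
  have s0 : 0 < s by exact: expR_gt0.
  have s_lt1 : s < 1 by rewrite expR_lt1 oppr_lt0.
  have s01 : 0 <= s <= 1 by rewrite ltW // ltW.
  have s_expR : s * expR y = 1 by rewrite /s expRN mulVf // gt_eqF // expR_gt0.
  have y_le : y <= (1 - s) * expR y.
    by rewrite mulrBl mul1r s_expR; have := expR_ge1Dx y; lra.
  have defect : (1 - s) * (s ^+ N * mean N) <= (1 - s) * (1 + c * expR y).
    rewrite mulrA; apply: le_trans (pgf_mean_defect_le _ N s01) _.
    have := h_lower y y_delta; have := ler_wpM2l c0 y_le; rewrite -/s; nra.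
  rewrite ler_pM2l ?subr_gt0 // in defect.
  have -> : mean N * s ^+ N.+1 = s ^+ N * mean N * s by rewrite exprSr; ring.
  apply: le_trans (ler_wpM2r (ltW s0) defect) _.
  by rewrite mulrDl mul1r -mulrA [expR y * s]mulrC s_expR mulr1 lerD2r ltW.
apply: (cvgr_to_le (cvg_mulr_expRN_exprn_at_right0 (mean N) N.+1)).
near=> y; apply: damped_mean_le; apply/andP; split.
  by near: y; exact: nbhs_right_gt.
by near: y; exact: nbhs_right_le.
Unshelve. all: by end_near.
Qed.

Lemma pgf_ge_expR_mulr_ln (mu y : R) : (forall N, mean N <= mu) -> 0 < y <= 1 ->
  expR (mu * ln y) <= h y.
Proof.
move=> mean_le /andP[y0 y1].
have y01 : 0 <= y <= 1 by rewrite ltW.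
set x := ln y; set E := expR (mu * x).
have Ex_le0 : E * x <= 0 by rewrite mulr_ge0_le0 ?ln_le0 // ltW // expR_gt0.
(* Tangent line of the convex map n |-> expR (n * x) at n = mu. *)
have tangent n : E * (1 + (n%:R - mu) * x) <= y ^+ n.
  rewrite -[y]lnK ?posrE // -/x -expRM_natl.
  rewrite (_ : n%:R * x = mu * x + (n%:R - mu) * x); last by ring.
  by rewrite expRD ler_wpM2l ?expR_ge1Dx // ltW // expR_gt0.
pose a N := E * (1 - mu * x) * \sum_(n < N) p n + E * mu * x.
have a_cvg : a @ \oo --> E.
  rewrite [X in _ --> X](_ : E = E * (1 - mu * x) * 1 + E * mu * x); last by ring.
  by apply: cvgD; [apply: cvgMl_tmp | exact: cvg_cst].
apply: (cvgr_to_le a_cvg); apply: nearW => N.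
have terms_ge0 n : 0 <= p n * y ^+ n by rewrite mulr_ge0 ?exprn_ge0 // ltW.
apply: le_trans (partial_sum_le_lim N terms_ge0 (h_series _ y01)).
have summed_tangent : \sum_(n < N) p n * (E * (1 + (n%:R - mu) * x)) <=
    \sum_(n < N) p n * y ^+ n.
  by apply: ler_sum => n _; rewrite ler_wpM2l.
apply: le_trans summed_tangent.
have -> : \sum_(n < N) p n * (E * (1 + (n%:R - mu) * x)) =
    E * (1 - mu * x) * \sum_(n < N) p n + E * x * mean N.
  by rewrite !mulr_sumr -big_split; apply: eq_bigr => n _ /=; ring.
by rewrite lerD2l [E * mu * x]mulrAC ler_wnM2l.
Qed.

End ProbabilityGeneratingFunction.

Lemma iter_in_oc01 {R : realFieldType} {f : R -> R} {s : R} (n : nat) :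
  (forall y, 0 < y <= 1 -> 0 < f y <= 1) -> 0 < s <= 1 -> 0 < iter n f s <= 1.
Proof. by move=> f_oc s_oc; elim: n => //= n; exact: f_oc. Qed.

Lemma ln_iter_ge {R : realType} {f : R -> R} {mu s : R} (n : nat) :
  0 <= mu -> (forall y, 0 < y <= 1 -> expR (mu * ln y) <= f y <= 1) ->
  0 < s <= 1 -> mu ^+ n * ln s <= ln (iter n f s).
Proof.
move=> mu0 f_bounds s_oc.
have f_oc y : 0 < y <= 1 -> 0 < f y <= 1.
  by move=> /f_bounds /andP[f_ge ->]; rewrite (lt_le_trans (expR_gt0 _) f_ge).
elim: n => [|n IHn]; first by rewrite expr0 mul1r.
have /andP[f_ge _] := f_bounds _ (iter_in_oc01 n f_oc s_oc).
rewrite exprS -mulrA iterS; apply: le_trans (ler_wpM2l mu0 IHn) _.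
by rewrite -ler_expR lnK // posrE (lt_le_trans (expR_gt0 _) f_ge).
Qed.

Lemma exprn1D_le_expR {R : realType} (a : R) (n : nat) :
  0 <= 1 + a -> (1 + a) ^+ n <= expR (n%:R * a).
Proof.
move=> a_ge; rewrite expRM_natl.
by apply: lerXn2r; rewrite ?nnegrE ?expR_ge1Dx // ltW // expR_gt0.
Qed.

Lemma exprn1D_truncn_le_expR {R : realType} (c a t : R) :
  0 < c -> 0 <= a -> 0 <= t -> (1 + a / c) ^+ Num.truncn (c * t) <= expR (a * t).
Proof.
move=> c0 a0 t0; set n := Num.truncn (c * t).
apply: le_trans (exprn1D_le_expR _ n _) _; first by rewrite addr_ge0 ?divr_ge0 // ltW.
have n_le : n%:R <= c * t by rewrite /n truncn_le mulr_ge0 // ltW.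
rewrite ler_expR (_ : a * t = c * t * (a / c)); last by field; rewrite gt_eqF.
by rewrite ler_wpM2r // divr_ge0 // ltW.
Qed.

Lemma Gk_lipschitz_lower {R : realType} {gamma : nat -> R} {g : nat -> R -> R}
    {k : nat} {L y : R} :
  (0 < k)%N -> 0 < gamma k -> g k 1 = 1 ->
  (forall x z, 0 <= x <= 1 -> 0 <= z <= 1 ->
     `|Gk gamma g k x - Gk gamma g k z| <= L * `|x - z|) ->
  0 <= y <= k%:R^-1 -> expR (- y) - L / gamma k * y <= g k (expR (- y)).
Proof.
move=> k0 gamma0 g1 G_lip /andP[y0 y_le].
have k_pos : 0 < k%:R :> R by rewrite ltr0n.
have z01 : 0 <= y * k%:R <= 1 by rewrite mulr_ge0 ?ler0n //= -ler_pdivlMr // div1r.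
have := G_lip _ 0 z01; rewrite lexx ler01 => /(_ isT).
rewrite /Gk mul0r oppr0 expR0 g1 subrr mulr0 subr0 addr0 mulfK ?gt_eqF //.
rewrite [`|y * _|]ger0_norm ?mulr_ge0 ?ler0n // ler_norml => /andP[G_ge _].
have -> : L / gamma k * y = L * (y * k%:R) / (k%:R * gamma k).
  by field; rewrite !gt_eqF.
suff : expR (- y) - g k (expR (- y)) <= L * (y * k%:R) / (k%:R * gamma k) by lra.
rewrite ler_pdivlMr ?mulr_gt0 //.
by move: G_ge; rewrite lerNl -mulrN opprB mulrC.
Qed.

Lemma Gk_lipschitz_pgf_ge {R : realType} {gamma : nat -> R} {g : nat -> R -> R}
    {k : nat} {L : R} :
  (0 < k)%N -> 0 < gamma k -> 0 <= L -> is_pgf (g k) ->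
  (forall x z, 0 <= x <= 1 -> 0 <= z <= 1 ->
     `|Gk gamma g k x - Gk gamma g k z| <= L * `|x - z|) ->
  forall y, 0 < y <= 1 -> expR ((1 + L / gamma k) * ln y) <= g k y <= 1.
Proof.
move=> k0 gamma0 L0 [p [p_ge0 [p_sum1 g_series]]] G_lip y /[dup] y_oc /andP[y0 y1].
have g1 := pgf1 p_sum1 g_series.
have mean_le N : \sum_(n < N) p n * n%:R <= 1 + L / gamma k.
  apply: (pgf_mean_le p_ge0 p_sum1 g_series _ k%:R^-1) => //.
  - by rewrite divr_ge0 // ltW.
  - by rewrite invr_gt0 ltr0n.
  - move=> z /andP[z0 z_le].
    by apply: Gk_lipschitz_lower k0 gamma0 g1 G_lip _; rewrite ltW.
rewrite (pgf_ge_expR_mulr_ln p_ge0 p_sum1 g_series _ _ mean_le) //=.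
by apply: (pgf_le1 p_ge0 p_sum1 g_series); rewrite ltW.
Qed.

Theorem lemma2p1p5 (R : realType) (gamma : nat -> R) (g : nat -> R -> R)
  (hgpos : forall k, 0 < gamma k)
  (hginf : gamma @ \oo --> +oo)
  (hpgf : forall k, is_pgf (g k))
  (hlip : unif_lipschitz01 (Gk gamma g)) :
  exists (B : R) (N : nat), 0 <= B /\
    forall k, (N <= k)%N -> forall t lambda : R, 0 <= t -> 0 <= lambda ->
      vk gamma g k t lambda <= lambda * expR (B * t).
Proof.
have [L G_lip] := hlip.
have L0 : 0 <= L.
  have := G_lip 0%N 0 1; rewrite !lexx ler01 sub0r normrN normr1 mulr1.
  by move=> /(_ isT isT); apply: le_trans.
exists L, 1%N; split => // k k_gt0 t lambda t0 lambda0.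
have k_pos : 0 < k%:R :> R by rewrite ltr0n.
set mu := 1 + L / gamma k; set n := Num.truncn (gamma k * t).
have g_bounds := Gk_lipschitz_pgf_ge k_gt0 (hgpos k) L0 (hpgf k) (G_lip k).
have s_oc : 0 < expR (- (lambda / k%:R)) <= 1.
  by rewrite expR_gt0 expR_le1 oppr_le0 divr_ge0 // ltW.
have mu0 : 0 <= mu by rewrite addr_ge0 ?divr_ge0 // ltW.
have := ln_iter_ge n mu0 g_bounds s_oc; rewrite expRK /vk -/n => ln_iter_le.
apply: (@le_trans _ _ (lambda * mu ^+ n)).
  rewrite lerNl (_ : - (lambda * mu ^+ n) = k%:R * (mu ^+ n * - (lambda / k%:R))).
    by rewrite ler_wpM2l // ltW.
  by field; rewrite gt_eqF.
by rewrite ler_wpM2l // exprn1D_truncn_le_expR.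
Qed.
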